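(* Let $n,r$ be positive integers, and let $M(n,r)$ be the maximum of $\mathcal{R}(\mathcal{F})=\Delta(\mathcal{F})/\delta(\mathcal{F})$ over all maximal intersecting families $\mathcal{F}\subseteq\binom{[n]}{r}$ with $\bigcup\mathcal{F}=[n]$. (i) For any values of $n$ and $r$, $M(n,r)\le n+r^r$. In particular, if $r<\frac{\log n}{\log\log n}$, then $M(n,r)\le(1+o(1))n$ (as $n\to\infty$). (ii) If $2r+2<n$, then \[ M(n,r)\ \ge\ n-2r+3-\frac{n-2r+2}{\binom{2r-3}{r-2}}. \] In particular, if $r=r(n)\to\infty$ and $r<\frac{\log n}{\log\log n}$, then $M(n,r)\sim n$ (i.e. $M(n,r)/n\to 1$ as $n\to\infty$).
   Context: $[n]=\{1,\dots,n\}$ and $\binom{[n]}{r}$ denotes the family of all $r$-element subsets of $[n]$. A family $\mathcal{F}$ of sets is intersecting if $F_1\cap F_2\neq\emptyset$ for all $F_1,F_2\in\mathcal{F}$. A family $\mathcal{F}\subseteq\binom{[n]}{r}$ is maximal intersecting if it is intersecting and for every $G\in\binom{[n]}{r}\setminus\mathcal{F}$ there is $F\in\mathcal{F}$ with $F\cap G=\emptyset$. For $x\in[n]$, the degree $d(x)$ is the number of sets of $\mathcal{F}$ containing $x$; $\Delta(\mathcal{F})$ and $\delta(\mathcal{F})$ are the maximum and minimum degree over $x\in[n]$. The condition $\bigcup\mathcal{F}=[n]$ guarantees $\delta(\mathcal{F})>0$. Asymptotic notation ($o(1)$, $\sim$) refers to $n\to\infty$ with $r=r(n)$. *)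

From HB Require Import structures.
From mathcomp Require Import all_boot all_order all_algebra.
From mathcomp Require Import all_classical all_reals all_analysis.
Set Implicit Arguments. Unset Strict Implicit. Unset Printing Implicit Defensive.
Import Order.TTheory GRing.Theory Num.Theory.

Section Fam.
Variable n : nat.
Implicit Types (F : {set {set 'I_n}}) (r : nat).

Definition intersecting F : bool :=
  [forall A in F, forall B in F, A :&: B != finset.set0].

Definition max_intersecting r F : bool :=
  [&& [forall A in F, #|A| == r], intersecting F &
      [forall G : {set 'I_n}, ((#|G| == r) && (G \notin F)) ==>
                              [exists A in F, A :&: G == finset.set0]]].

Definition covers F : bool := \bigcup_(A in F) A == [set: 'I_n].

Definition deg F (x : 'I_n) : nat := #|[set A in F | x \in A]|.

Definition Delta F : nat := \max_(x : 'I_n) deg F x.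
(* every degree is <= #|F|, so #|F| serves as neutral element for min *)
Definition delta F : nat := \big[minn/#|F|]_(x : 'I_n) deg F x.

Definition ratio (R : realType) F : R := ((Delta F)%:R / (delta F)%:R)%R.
End Fam.

(* M(n,r): the maximum of the ratio over all maximal intersecting families
   F in binom([n],r) with union [n]  (0 if there is no such family). *)
Definition M (R : realType) (n r : nat) : R :=
  \big[Num.max/0%R]_(F : {set {set 'I_n}} | max_intersecting r F && covers F)
     ratio R F.

(** Fix points x and y of a maximal intersecting family F of
    r-sets.  A member G through y either contains x, or has a point z such that
    G minus z still meets every member; then x |: (G :\ z) is itself a member
    (by maximality) and determines G together with z, so there are at most
    n * d(x) such G.  Otherwise G is a minimal transversal of F of size r, and
    branching on a point of a missed member shows that there are at most r^r of
    those.  Hence d(y) <= (n + r^r) d(x), and r < log n / log log n makes r^r =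
    o(n).

    Split [n] into a point y, a (2r-3)-set S and the rest T, and
    take the r-sets A with |A :&: T| <= [y \in A].  A member through t in T is
    {y, t} plus an (r-2)-subset C of S, while every such C yields |T| + 1
    members through y, namely {y, t'} :|: C for t' in T and y |: (S :\: C).  So
    d(y) >= (n - 2r + 3) d(t), slightly more than the stated bound.

    As n - 2r + 3 >= n - 2 r^r, both bounds are within 2 r^r = o(n) of n. *)

From Pilot Require Import Defs.
From HB Require Import structures.
From mathcomp Require Import all_boot zify.
Set Implicit Arguments. Unset Strict Implicit. Unset Printing Implicit Defensive.

Lemma card_bigcup_le (T I : finType) (P : {pred I}) (f : I -> {set T}) :
  #|\bigcup_(i in P) f i| <= \sum_(i in P) #|f i|.
Proof.
elim/big_rec2: _ => [|i U s _ IH]; first by rewrite cards0.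
by apply: leq_trans (leq_card_setU _ _).1 _; rewrite leq_add2l.
Qed.

Lemma subset_of_card (T : finType) (X : {set T}) k :
  k <= #|X| -> exists2 Y : {set T}, Y \subset X & #|Y| = k.
Proof.
move=> leKX; exists [set x in take k (enum X)].
  by apply/subsetP=> x; rewrite inE => /mem_take; rewrite mem_enum.
rewrite cardsE (card_uniqP _) ?take_uniq ?enum_uniq // size_take -cardE.
by case: ltnP => // leXk; apply/eqP; rewrite eqn_leq leKX leXk.
Qed.

Section Transversals.
Variables (n r : nat) (F : {set {set 'I_n}}).
Implicit Types (G H S : {set 'I_n}).

Definition transversal G := [forall B in F, B :&: G != set0].

Definition reducible G := [exists z in G, transversal (G :\ z)].

Definition min_transversals S := [set G : {set 'I_n} |
  [&& #|G| == r, S \subset G, transversal G & ~~ reducible G]].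

Lemma transversalS G H : G \subset H -> transversal G -> transversal H.
Proof.
move=> sGH /forallP tG; apply/forallP=> B; apply/implyP=> BF.
apply: contraNN (implyP (tG B) BF); rewrite -!subset0.
exact/subset_trans/setIS.
Qed.

Lemma min_transversals_large S :
  r <= #|S| -> min_transversals S \subset [set S].
Proof.
move=> leRS; apply/subsetP=> G; rewrite !inE => /and4P[/eqP cG sSG _ _].
by rewrite eq_sym eqEcard sSG cG.
Qed.

Lemma min_transversals_transversal S :
  transversal S -> min_transversals S \subset [set S].
Proof.
move=> tS; apply/subsetP=> G; rewrite !inE => /and4P[_ sSG _ irrG].
rewrite eqEsubset sSG andbT; apply/subsetP=> z zG; apply: contraNT irrG => zS.
apply/existsP; exists z; rewrite zG (transversalS _ tS) //.
by apply/subsetP=> w wS; rewrite !inE (subsetP sSG) // andbT; apply: contraNneq zS => <-.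
Qed.

Lemma card_min_transversals S k :
  0 < r -> {in F, forall B : {set 'I_n}, #|B| <= r} ->
  r <= #|S| + k -> #|min_transversals S| <= r ^ k.
Proof.
move=> r_gt0 cF; elim: k S => [|k IH] S leRS.
  apply: leq_trans (subset_leq_card (min_transversals_large _)) _.
    by rewrite -[#|S|]addn0.
  by rewrite cards1.
have [tS|/forallPn[B]] := boolP (transversal S).
  apply: leq_trans (subset_leq_card (min_transversals_transversal tS)) _.
  by rewrite cards1 expn_gt0 r_gt0.
rewrite negb_imply negbK => /andP[BF /eqP BS0].
have sub : min_transversals S \subset \bigcup_(b in B) min_transversals (b |: S).
  apply/subsetP=> G; rewrite inE => /and4P[cG sSG tG irrG].
  have /set0Pn[b] := implyP (forallP tG B) BF; rewrite inE => /andP[bB bG].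
  by apply/bigcupP; exists b; rewrite // inE cG tG irrG subUset sub1set bG sSG.
apply: leq_trans (subset_leq_card sub) _; apply: leq_trans (card_bigcup_le _ _) _.
apply: leq_trans (_ : \sum_(b in B) r ^ k <= _); last first.
  by rewrite sum_nat_const expnS leq_mul // cF.
apply: leq_sum => b bB; apply: IH.
have bS : b \notin S by apply/negP=> bS; have := in_set0 b; rewrite -BS0 inE bB bS.
by rewrite cardsU1 bS; lia.
Qed.
End Transversals.

Section Degrees.
Variables (n : nat) (F : {set {set 'I_n}}).
Implicit Types (x y : 'I_n).

Lemma deg_le_card x : deg F x <= #|F|.
Proof. by apply/subset_leq_card/subsetP=> A; rewrite inE => /andP[]. Qed.

Lemma deg_gt0 x : covers F -> 0 < deg F x.
Proof.
move=> /eqP covF; have : x \in \bigcup_(A in F) A by rewrite covF inE.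
by case/bigcupP=> A AF xA; apply/card_gt0P; exists A; rewrite inE AF xA.
Qed.

Lemma delta_le_deg x : delta F <= deg F x.
Proof.
rewrite /delta; elim: (index_enum _) (mem_index_enum x) => //= i s IHs.
rewrite big_cons inE => /predU1P[->|/IHs]; first exact: geq_minl.
exact/leq_trans/geq_minr.
Qed.

Lemma deg_le_Delta x : deg F x <= Delta F.
Proof. exact: leq_bigmax. Qed.

Lemma delta_gt0 : 0 < n -> covers F -> 0 < delta F.
Proof.
move=> n_gt0 covF; pose x0 := Ordinal n_gt0.
rewrite /delta; elim/big_ind: _ => [|a b|x _]; last exact: deg_gt0.
- exact: leq_trans (deg_gt0 x0 covF) (deg_le_card x0).
- by rewrite leq_min => -> ->.
Qed.

Lemma Delta_le_mul_delta c : 0 < c -> (forall x y, deg F y <= c * deg F x) ->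
  Delta F <= c * delta F.
Proof.
move=> c_gt0 degF; apply/bigmax_leqP=> y _; rewrite /delta.
elim/big_ind: _ => [|a b ha hb|x _]; last exact: degF.
- by rewrite (leq_trans (deg_le_card y)) ?leq_pmull.
- by rewrite /minn; case: ltnP.
Qed.
End Degrees.

Section MaxIntersecting.
Variables (n r : nat) (F : {set {set 'I_n}}).
Hypothesis maxF : max_intersecting r F.
Implicit Types (G : {set 'I_n}) (x y : 'I_n).

Lemma card_max_intersecting A : A \in F -> #|A| = r.
Proof. by case/and3P: maxF => /forallP cF _ _ AF; apply/eqP/(implyP (cF A)). Qed.

Lemma transversal_mem G : G \in F -> transversal F G.
Proof.
case/and3P: maxF => _ /forallP iF _ GF; apply/forallP=> B; apply/implyP=> BF.
exact: (implyP (forallP (implyP (iF B) BF) G)).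
Qed.

Lemma mem_transversal G : #|G| = r -> transversal F G -> G \in F.
Proof.
case/and3P: maxF => _ _ /forallP mF cG tG; apply: contraT => GnF.
move: (mF G); rewrite cG eqxx GnF => /existsP[A /andP[AF /eqP AG0]].
by have := implyP (forallP tG A) AF; rewrite AG0 eqxx.
Qed.

Lemma card_reducible_le x :
  #|[set G in F | (x \in G) || reducible F G]| <= deg F x * n.
Proof.
pose z G := odflt x [pick z in G | transversal F (G :\ z)].
have zP G : reducible F G -> (z G \in G) && transversal F (G :\ z G).
  by case/existsP=> w wP; rewrite /z; case: pickP => [//|/(_ w)]; rewrite wP.
pose phi G := if x \in G then (G, x) else (x |: (G :\ z G), z G).
pose undo (p : {set 'I_n} * 'I_n) := if p.2 == x then p.1 else p.2 |: (p.1 :\ x).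
set D := [set G in F | _].
have phiK : {in D, cancel phi undo}.
  move=> G; rewrite inE /phi /undo => /andP[_ xrG].
  have [xG|xG] := boolP (x \in G); first by rewrite /= eqxx.
  rewrite (negbTE xG) in xrG; have /andP[zG _] := zP G xrG.
  rewrite /= ifN; last by apply: contraNneq xG => <-.
  by rewrite setU1K ?setD1K // !inE (negbTE xG) andbF.
have phiD : phi @: D \subset setX [set A in F | x \in A] [set: 'I_n].
  apply/subsetP=> _ /imsetP[G GD ->]; move: GD; rewrite inE /phi => /andP[GF].
  have [xG _|xG /= /zP/andP[zG tG]] := boolP (x \in G); first by rewrite !inE GF xG.
  rewrite in_setX in_setT andbT inE setU11 andbT.
  apply: mem_transversal; last exact: transversalS (subsetUr _ _) tG.
  rewrite cardsU1 !inE (negbTE xG) andbF -(card_max_intersecting GF).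
  by rewrite (cardsD1 (z G) G) zG.
rewrite -(card_in_imset (can_in_inj phiK)).
by apply: leq_trans (subset_leq_card phiD) _; rewrite cardsX cardsT card_ord.
Qed.

Lemma irreducible_min_transversals :
  [set G in F | ~~ reducible F G] \subset min_transversals r F set0.
Proof.
apply/subsetP=> G; rewrite !inE => /andP[GF ->].
by rewrite card_max_intersecting // eqxx sub0set transversal_mem.
Qed.

Lemma deg_le_add x y : 0 < r -> deg F y <= deg F x * n + r ^ r.
Proof.
move=> r_gt0.
have irr : #|[set G in F | ~~ reducible F G]| <= r ^ r.
  apply: leq_trans (subset_leq_card irreducible_min_transversals) _.
  apply: card_min_transversals r_gt0 _ _; last by rewrite cards0.
  by move=> B /card_max_intersecting ->.
have sub : [set G in F | y \in G] \subset
    [set G in F | (x \in G) || reducible F G] :|: [set G in F | ~~ reducible F G].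
  apply/subsetP=> G; rewrite !inE => /andP[GF _].
  by rewrite GF /=; case: reducible; rewrite ?orbT.
apply: leq_trans (subset_leq_card sub) _; apply: leq_trans (leq_card_setU _ _).1 _.
exact: leq_add (card_reducible_le x) irr.
Qed.

Lemma Delta_le_max_intersecting :
  0 < r -> covers F -> Delta F <= (n + r ^ r) * delta F.
Proof.
move=> r_gt0 covF; apply: Delta_le_mul_delta.
  by rewrite addn_gt0 expn_gt0 r_gt0 orbT.
move=> x y; rewrite mulnDl mulnC; apply: leq_trans (deg_le_add x y r_gt0) _.
by rewrite leq_add2l leq_pmulr ?deg_gt0.
Qed.
End MaxIntersecting.

Lemma setI_neq0_of_card (T : finType) (X Y Z : {set T}) :
  X \subset Z -> Y \subset Z -> #|Z| < #|X| + #|Y| -> X :&: Y != set0.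
Proof.
move=> sXZ sYZ; apply: contraTneq => XY0; rewrite -leqNgt.
rewrite -(subn0 (_ + _)) -(cards0 T) -XY0 -cardsU.
by apply: subset_leq_card; rewrite subUset sXZ.
Qed.

Section Construction.
Variables (n r : nat) (y : 'I_n) (S : {set 'I_n}).
Hypotheses (r_gt1 : 1 < r) (yS : y \notin S) (cardS : #|S| = 2 * r - 3).
Implicit Types (A C G : {set 'I_n}) (t w : 'I_n).

Definition outer := ~: (y |: S).
Local Notation T := outer.

(* The r-subsets of S, and the r-sets through y meeting T at most once. *)
Definition extremal_family :=
  [set A : {set 'I_n} | (#|A| == r) && (#|A :&: T| <= (y \in A))].
Local Notation F0 := extremal_family.

Hypothesis T_gt1 : 1 < #|T|.

Lemma in_T w : (w \in T) = (w != y) && (w \notin S).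
Proof. by rewrite !inE negb_or. Qed.

Lemma yT : y \notin T. Proof. by rewrite in_T eqxx. Qed.

Lemma disjoint_ST w : w \in S -> w \notin T.
Proof. by rewrite in_T => ->; rewrite andbF. Qed.

Lemma disjoint_TS w : w \in T -> w \notin S.
Proof. by apply: contraTN; apply: disjoint_ST. Qed.

Lemma card_split A : #|A| = (y \in A) + #|A :&: S| + #|A :&: T|.
Proof.
rewrite -(cardsID (y |: S) A) setDE -/T; congr (_ + _).
have [yA|yA] := boolP (y \in A).
  rewrite (_ : A :&: (y |: S) = y |: (A :&: S)).
    by rewrite cardsU1 inE (negbTE yS) andbF.
  by apply/setP=> w; rewrite !inE; case: eqVneq => // ->; rewrite yA.
rewrite (_ : A :&: (y |: S) = A :&: S) //.
apply/setP=> w; rewrite !inE; case: eqVneq => // ->.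
by rewrite (negbTE yA) (negbTE yS).
Qed.

Lemma sub_S_extremal A : A \subset S -> #|A| = r -> A \in F0.
Proof.
move=> sAS cA; rewrite inE cA eqxx (_ : A :&: T = set0) ?cards0 //.
apply/setP=> w; rewrite in_set0 in_setI; apply/andP=> -[/(subsetP sAS) wS wT].
by rewrite (negbTE (disjoint_ST wS)) in wT.
Qed.

Lemma y_extremal A : y \in A -> #|A| = r -> #|A :&: T| <= 1 -> A \in F0.
Proof. by move=> yA cA leAT; rewrite inE cA eqxx yA. Qed.

Lemma setI_yST C : C \subset S -> (y |: C) :&: T = set0.
Proof.
move=> sCS; apply/setP=> w; rewrite in_set0 in_setI in_setU1.
case: eqVneq => [->|_]; first by rewrite (negbTE yT).
by apply/andP=> -[/(subsetP sCS) /disjoint_ST /negbTE ->].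
Qed.

Lemma yS_extremal C : C \subset S -> #|C| = r - 1 -> y |: C \in F0.
Proof.
move=> sCS cC; apply: y_extremal; first exact: setU11.
  have yC : y \notin C by apply: contra yS => /(subsetP sCS).
  rewrite cardsU1 yC cC /=; lia.
by rewrite setI_yST ?cards0.
Qed.

Lemma yt_extremal t C : t != y -> C \subset S -> t \notin C -> #|C| = r - 2 ->
  y |: (t |: C) \in F0.
Proof.
move=> ty sCS tC cC; apply: y_extremal; first exact: setU11.
  have yC : y \notin C by apply: contra yS => /(subsetP sCS).
  rewrite cardsU1 cardsU1 !inE eq_sym (negbTE ty) (negbTE yC) tC cC /=; lia.
rewrite -(cards1 t); apply/subset_leq_card/subsetP=> w.
rewrite in_setI !in_setU1 in_set1; case: eqVneq => [->|_]; first by rewrite (negbTE yT).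
by case: eqVneq => // _ /andP[/(subsetP sCS) /disjoint_ST /negbTE ->].
Qed.

Lemma y_outer_extremal t C : t \in T -> C \subset S -> #|C| = r - 2 ->
  y |: (t |: C) \in F0.
Proof.
move=> tT sCS cC; apply: yt_extremal => //.
  by apply: contraTneq tT => ->; exact: yT.
by apply: contraTN tT => /(subsetP sCS) /disjoint_ST.
Qed.

Lemma extremal_cardS A : A \in F0 -> r <= #|A :&: S| + (y \in A).*2.
Proof.
rewrite inE => /andP[/eqP cA]; move: (card_split A); rewrite cA.
by case: (y \in A) => /=; lia.
Qed.

Lemma extremal_intersecting : intersecting F0.
Proof.
apply/forallP=> A; apply/implyP=> AF; apply/forallP=> B; apply/implyP=> BF.
have [/andP[yA yB]|nyAB] := boolP ((y \in A) && (y \in B)).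
  by apply/set0Pn; exists y; rewrite inE yA yB.
suff : (A :&: S) :&: (B :&: S) != set0.
  by apply: contraNneq => AB0; rewrite setIACA AB0 set0I.
apply: setI_neq0_of_card (subsetIr _ _) (subsetIr _ _) _.
move: (extremal_cardS AF) (extremal_cardS BF) nyAB; rewrite cardS.
by case: (y \in A); case: (y \in B) => /=; lia.
Qed.

Lemma card_S_setD G : #|S :\: G| = 2 * r - 3 - #|G :&: S|.
Proof. by rewrite cardsD cardS setIC. Qed.

Lemma extremal_avoid G :
  #|G| = r -> G \notin F0 -> exists2 A, A \in F0 & A \subset ~: G.
Proof.
move=> cG GnF.
have ltT : (y \in G) < #|G :&: T| by move: GnF; rewrite inE cG eqxx -ltnNge.
have cSG := card_S_setD G.
have sSG : S :\: G \subset ~: G by apply/subsetP=> w; rewrite !inE => /andP[->].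
have sSGS : S :\: G \subset S := subsetDl S G.
move: (card_split G) ltT; rewrite cG; have [yG|yG] := boolP (y \in G) => splitG ltT.
  have /subset_of_card[Y sY cY] : r <= #|S :\: G| by rewrite cSG; lia.
  exists Y; first exact: sub_S_extremal (subset_trans sY sSGS) cY.
  exact: subset_trans sY sSG.
have [sTG|/subsetPn[t tT tG]] := boolP (T \subset G).
  have cGT : #|G :&: T| = #|T|.
    by apply/eq_card=> w; rewrite inE andb_idl // => /(subsetP sTG).
  have /subset_of_card[D sD cD] : r - 1 <= #|S :\: G| by rewrite cSG; lia.
  exists (y |: D); first exact: yS_extremal (subset_trans sD sSGS) cD.
  by rewrite subUset sub1set inE yG (subset_trans sD sSG).
have /subset_of_card[C sC cC] : r - 2 <= #|S :\: G| by rewrite cSG; lia.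
exists (y |: (t |: C)); first exact: y_outer_extremal (subset_trans sC sSGS) cC.
by rewrite !subUset !sub1set !inE yG tG (subset_trans sC sSG).
Qed.

Lemma extremal_maximal : [forall G : {set 'I_n}, ((#|G| == r) && (G \notin F0)) ==>
  [exists A in F0, A :&: G == set0]].
Proof.
apply/forallP=> G; apply/implyP=> /andP[/eqP cG GnF].
have [A AF sAG] := extremal_avoid cG GnF.
by apply/existsP; exists A; rewrite AF /= setI_eq0 disjoints_subset.
Qed.

Lemma extremal_covers : covers F0.
Proof.
apply/eqP/setP=> w; rewrite inE; apply/bigcupP.
have [->|wy] := eqVneq w y.
  have /subset_of_card[D sD cD] : r - 1 <= #|S| by rewrite cardS; lia.
  by exists (y |: D); [exact: yS_extremal|exact: setU11].
have /subset_of_card[C sC cC] : r - 2 <= #|S :\ w|.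
  by move: (cardsD1 w S); rewrite cardS; case: (w \in S); lia.
have sCS : C \subset S by apply: subset_trans sC (subsetDl _ _).
have wC : w \notin C by apply/negP=> /(subsetP sC); rewrite !inE eqxx.
by exists (y |: (w |: C)); [exact: yt_extremal|rewrite !inE eqxx orbT].
Qed.

Lemma setI_ytS t C : t \in T -> C \subset S -> (y |: (t |: C)) :&: S = C.
Proof.
move=> tT sCS; apply/setP=> w; rewrite in_setI !in_setU1.
have [wS|wS] := boolP (w \in S); last first.
  by rewrite andbF (contraNF (subsetP sCS w) wS).
have [wy wt] : w != y /\ w != t.
  by split; apply: contraTneq wS => ->; [exact: yS|exact: disjoint_TS].
by rewrite (negbTE wy) (negbTE wt) andbT.
Qed.

Lemma setI_ytT t C : t \in T -> C \subset S -> (y |: (t |: C)) :&: T = [set t].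
Proof.
move=> tT sCS; apply/setP=> w; rewrite in_setI !in_setU1 in_set1.
case: eqVneq => [->|_].
  by rewrite (negbTE yT); apply/esym/eqP=> ty; rewrite -ty (negbTE yT) in tT.
case: eqVneq => [->|_]; first by rewrite tT.
by apply/andP=> -[/(subsetP sCS) /disjoint_ST /negbTE ->].
Qed.

Definition S_subsets :=
  [set C : {set 'I_n} | (C \subset S) && (#|C| == r - 2)].

Lemma extremal_through_T t A : t \in T -> A \in F0 -> t \in A ->
  A = y |: (t |: (A :&: S)) /\ A :&: S \in S_subsets.
Proof.
move=> tT; rewrite inE => /andP[/eqP cA leAT] tA.
have tAT : t \in A :&: T by rewrite inE tA.
have yA : y \in A.
  apply: contraTT leAT => yA; rewrite (negbTE yA) -ltnNge card_gt0.
  by apply/set0Pn; exists t.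
rewrite yA in leAT.
have AT : A :&: T = [set t] by apply/eqP; rewrite eq_sym eqEcard sub1set tAT cards1.
have eA : A = y |: (t |: (A :&: S)).
  apply/setP=> w; rewrite !in_setU1 in_setI.
  have [->|wy] := eqVneq w y; first by rewrite yA.
  have [wS|wnS] := boolP (w \in S).
    by rewrite andbT orFb; case: eqVneq => // ->; rewrite tA.
  have wT : w \in T by rewrite in_T wy.
  by rewrite andbF orbF orFb -in_set1 -AT inE wT andbT.
split=> //; rewrite inE subsetIr /=; move: (card_split A); rewrite cA yA AT cards1.
by move=> ->; rewrite addn1 add1n subn2.
Qed.

Lemma deg_T_le t : t \in T -> deg F0 t <= #|S_subsets|.
Proof.
move=> tT; pose through := [set A in F0 | t \in A].
have thP A : A \in through -> A = y |: (t |: (A :&: S)) /\ A :&: S \in S_subsets.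
  by rewrite inE => /andP[AF tA]; exact: extremal_through_T.
have inj : {in through &, injective (fun A => A :&: S)}.
  by move=> A B /thP[eA _] /thP[eB _] /= eAB; rewrite eA eB eAB.
rewrite /deg -/through -(card_in_imset inj).
by apply/subset_leq_card/subsetP=> _ /imsetP[A /thP[_ AS] ->].
Qed.

Lemma deg_y_ge : (#|T| + 1) * #|S_subsets| <= deg F0 y.
Proof.
pose g1 (p : 'I_n * {set 'I_n}) := y |: (p.1 |: p.2).
pose g2 C := y |: (S :\: C).
have g1P p :
    p \in setX T S_subsets -> [/\ p.1 \in T, p.2 \subset S & #|p.2| = r - 2].
  by rewrite !inE => /and3P[-> -> /eqP].
have g1inj : {in setX T S_subsets &, injective g1}.
  move=> [t C] [t' C'] /g1P[/= tT sC _] /g1P[/= t'T sC' _]; rewrite /g1 /= => e.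
  have /set1_inj et : [set t] = [set t'] by rewrite -(setI_ytT tT sC) e setI_ytT.
  by rewrite -(setI_ytS tT sC) e setI_ytS // et.
have g2inj : {in S_subsets &, injective g2}.
  move=> C C'; rewrite !inE => /andP[sC _] /andP[sC' _] e; apply/setP=> w.
  have [wS|wS] := boolP (w \in S); last first.
    by rewrite (contraNF (subsetP sC w) wS) (contraNF (subsetP sC' w) wS).
  move/setP/(_ w): e; rewrite /g2 !in_setU1 !in_setD wS /=.
  have /negbTE-> : w != y by apply: contraTneq wS => ->.
  by rewrite !orFb !andbT => /negb_inj.
have g1g2 : g1 @: setX T S_subsets :&: g2 @: S_subsets = set0.
  apply/setP=> A; rewrite in_set0 in_setI; apply/andP.
  case=> /imsetP[[t C] /g1P[/= tT sC _] ->] /imsetP[D _ e].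
  have := setI_ytT tT sC; move: e; rewrite /g1 /g2 /= => ->.
  by rewrite setI_yST ?subsetDl // => /setP/(_ t); rewrite !inE eqxx.
have sub :
    g1 @: setX T S_subsets :|: g2 @: S_subsets \subset [set A in F0 | y \in A].
  apply/subsetP=> A /setUP[/imsetP[[t C] /g1P[/= tT sC cC] ->]|/imsetP[C]].
    by rewrite inE setU11 andbT y_outer_extremal.
  rewrite inE => /andP[sC /eqP cC] ->; rewrite inE setU11 andbT.
  by apply: yS_extremal; rewrite ?subsetDl // cardsD cardS (setIidPr sC) cC; lia.
rewrite /deg; apply: leq_trans (subset_leq_card sub).
rewrite cardsU g1g2 cards0 subn0.
by rewrite (card_in_imset g1inj) (card_in_imset g2inj) cardsX mulnDl mul1n.
Qed.

Lemma extremal_ratio : (#|T| + 1) * delta F0 <= Delta F0.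
Proof.
have /card_gt0P[t tT] : 0 < #|T| by apply: ltnW.
apply: leq_trans (deg_le_Delta _ y); apply: leq_trans deg_y_ge.
by rewrite leq_mul2l (leq_trans (delta_le_deg _ t) (deg_T_le tT)) orbT.
Qed.
End Construction.

Lemma exists_extremal n r : 1 < r -> 2 * r <= n -> exists F : {set {set 'I_n}},
  [/\ max_intersecting r F, covers F & (n - 2 * r + 3) * delta F <= Delta F].
Proof.
move=> r_gt1 le2rn.
have /subset_of_card[L _ cL] : 2 * r - 2 <= #|[set: 'I_n]|.
  by rewrite cardsT card_ord; lia.
have /card_gt0P[y yL] : 0 < #|L| by rewrite cL; lia.
have yS : y \notin L :\ y by rewrite !inE eqxx.
have cS : #|L :\ y| = 2 * r - 3 by move: (cardsD1 y L); rewrite yL cL; lia.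
have cT : #|outer y (L :\ y)| = n - (2 * r - 2).
  by rewrite /outer setD1K // cardsCs setCK cL card_ord.
have T_gt1 : 1 < #|outer y (L :\ y)| by rewrite cT; lia.
exists (extremal_family r y (L :\ y)); split.
- apply/and3P; split; last exact: extremal_maximal.
    by apply/forallP=> A; apply/implyP; rewrite inE => /andP[].
  exact: extremal_intersecting.
- exact: extremal_covers.
- by rewrite (_ : n - 2 * r + 3 = #|outer y (L :\ y)| + 1) ?extremal_ratio // cT; lia.
Qed.

(* Imported only now: the analysis libraries shadow [set0], [subsetP], ...
   of finset, used above. *)
From mathcomp Require Import all_order all_algebra.
From mathcomp Require Import all_classical all_reals all_analysis.
From mathcomp Require Import ring lra.
Import Order.TTheory GRing.Theory Num.Theory.
Local Open Scope classical_set_scope.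
Local Open Scope ring_scope.

Section RealBounds.
Variable R : realType.
Implicit Types (a s u L x : R).

Lemma sqr_div4_le_expR u : 0 <= u -> u ^+ 2 / 4 <= expR u.
Proof.
move=> u_ge0; have := expR_ge1Dx (u / 2) => le_half.
rewrite [in leRHS](splitr u) expRD (_ : u ^+ 2 / 4 = u / 2 * (u / 2)); last by field.
by apply: ler_pM; lra.
Qed.

Lemma mul_ln_le s a : 1 <= s -> s <= a -> s * ln s <= a * ln a.
Proof.
move=> s_ge1 le_sa; have s_gt0 : 0 < s by lra.
have ln_s_ge0 : 0 <= ln s by rewrite ln_ge0.
apply: le_trans (_ : a * ln s <= _); first by rewrite ler_wpM2r.
by rewrite ler_wpM2l ?ler_ln ?posrE; lra.
Qed.

(* With a = L / ln L: a ln a = L - a ln ln L, and a >= ln L / 4. *)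
Lemma div_ln_mul_ln_le L : expR 1 <= ln L ->
  L / ln L * ln (L / ln L) <= L - ln L / 4.
Proof.
set LL := ln L => LL_ge_e.
have e_ge2 : 2 <= expR 1 :> R by have := expR_ge1Dx (1 : R); lra.
have LL_gt0 : 0 < LL by lra.
have L_gt0 : 0 < L.
  rewrite ltNge; apply/negP=> L_le0.
  by have := ln_le0 (le_trans L_le0 ler01); rewrite -/LL; lra.
have lnLL_ge1 : 1 <= ln LL by rewrite -(expRK 1) ler_ln ?posrE ?expR_gt0.
have a_ge : LL / 4 <= L / LL.
  rewrite ler_pdivlMr // -(lnK (_ : L \in Num.pos)) ?posrE // -/LL.
  by rewrite (_ : LL / 4 * LL = LL ^+ 2 / 4) ?sqr_div4_le_expR ?ltW //; ring.
rewrite ln_div ?posrE // -/LL mulrBr divfK ?gt_eqF //.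
have : L / LL <= L / LL * ln LL by rewrite ler_peMr // (le_trans _ a_ge) ?divr_ge0 ?ltW.
lra.
Qed.

Lemma expn_self_le x (r : nat) : (0 < r)%N -> expR 1 <= ln (ln x) ->
  r%:R < ln x / ln (ln x) -> (r ^ r)%:R <= x * expR (- (ln (ln x) / 4)).
Proof.
move=> r_gt0 LL_ge_e lt_r.
have x_gt0 : 0 < x.
  rewrite ltNge; apply/negP=> x_le0.
  have := ln_le0 (le_trans (ln_le0 (le_trans x_le0 ler01)) ler01).
  have := expR_gt0 (1 : R); lra.
rewrite natrX -{1}(lnK (_ : (r%:R : R) \in Num.pos)) ?posrE ?ltr0n // -expRM_natl.
rewrite -{1}(lnK (_ : x \in Num.pos)) ?posrE // -expRD ler_expR.
apply: le_trans (div_ln_mul_ln_le LL_ge_e).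
by apply: mul_ln_le (ltW lt_r); rewrite ler1n.
Qed.
End RealBounds.

Lemma near_ln_ln_ge (R : realType) (B : R) :
  \forall k \near \oo, B <= ln (ln (k%:R : R)).
Proof.
near=> k.
have le_k : expR (expR B) <= k%:R by near: k; exact: nbhs_infty_ger.
have k_gt0 : 0 < k%:R :> R := lt_le_trans (expR_gt0 _) le_k.
have le_lnk : expR B <= ln (k%:R : R).
  by rewrite -(expRK (expR B)) ler_ln ?posrE ?expR_gt0.
by rewrite -(expRK B) ler_ln ?posrE ?expR_gt0 // (lt_le_trans (expR_gt0 B)).
Unshelve. all: by end_near.
Qed.

Lemma near_expn_self_le (R : realType) (r : nat -> nat) (eps : R) :
  (forall n, (0 < r n)%N) ->
  (\forall n \near \oo, (r n)%:R < ln (n%:R : R) / ln (ln (n%:R : R))) ->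
  0 < eps -> \forall k \near \oo, ((r k ^ r k)%:R : R) <= eps * k%:R.
Proof.
move=> r_gt0 r_small eps_gt0; near=> k.
have LL_ge : Num.max (expR 1) (- 4 * ln eps) <= ln (ln (k%:R : R)).
  by near: k; exact: near_ln_ln_ge.
rewrite ge_max in LL_ge; case/andP: LL_ge => LL_ge_e LL_ge_eps.
apply: le_trans (expn_self_le (r_gt0 k) LL_ge_e _) _; first by near: k.
rewrite mulrC ler_wpM2r // -[leRHS](lnK (_ : eps \in Num.pos)) ?posrE // ler_expR; lra.
Unshelve. all: by end_near.
Qed.

Lemma leq_self_expn r : (0 < r)%N -> (r <= r ^ r)%N.
Proof. by move=> r_gt0; rewrite -[X in (X <= _)%N]expn1 leq_pexp2l. Qed.

Section MBounds.
Variable R : realType.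

Lemma ratio_le_M n r (F : {set {set 'I_n}}) :
  max_intersecting r F -> covers F -> Defs.ratio R F <= M R n r.
Proof.
move=> maxF covF; rewrite /M.
apply: (le_bigmax_cond _ (P := fun F => max_intersecting r F && covers F)).
by rewrite maxF covF.
Qed.

Lemma M_le n r : (0 < n)%N -> (0 < r)%N -> M R n r <= n%:R + (r ^ r)%:R.
Proof.
move=> n_gt0 r_gt0; rewrite /M; elim/big_ind: _ => [|a b|F /andP[maxF covF]].
- by rewrite addr_ge0.
- by rewrite ge_max => -> ->.
rewrite /ratio ler_pdivrMr ?ltr0n ?delta_gt0 // -natrD -natrM ler_nat.
exact: Delta_le_max_intersecting.
Qed.

Lemma M_ge n r : (1 < r)%N -> (2 * r <= n)%N -> (n - 2 * r + 3)%:R <= M R n r.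
Proof.
move=> r_gt1 le_2rn; have [F [maxF covF ratioF]] := exists_extremal r_gt1 le_2rn.
apply: le_trans (ratio_le_M maxF covF).
have n_gt0 : (0 < n)%N by lia.
by rewrite /ratio ler_pdivlMr ?ltr0n ?delta_gt0 // -natrM ler_nat.
Qed.

Lemma dist_M_le n r :
  (1 < r)%N -> (2 * r <= n)%N -> `|M R n r - n%:R| <= 2 * (r ^ r)%:R.
Proof.
move=> r_gt1 le_2rn; have n_gt0 : (0 < n)%N by lia.
have le_rr := leq_self_expn (ltnW r_gt1).
have ub := M_le n_gt0 (ltnW r_gt1); have lb := M_ge r_gt1 le_2rn.
have : (n <= (n - 2 * r + 3) + 2 * r ^ r)%N by lia.
rewrite -(ler_nat R) natrD natrM => le_n.
by rewrite ler_norml; apply/andP; split; lra.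
Qed.
End MBounds.

Section Asymptotics.
Variables (R : realType) (r : nat -> nat).
Hypothesis r_gt0 : forall n, (0 < r n)%N.
Hypothesis r_small :
  \forall n \near \oo, (r n)%:R < ln (n%:R : R) / ln (ln (n%:R : R)).

Lemma near_M_le eps : 0 < eps ->
  \forall n \near \oo, M R n (r n) <= (1 + eps) * n%:R.
Proof.
move=> eps_gt0; near=> n.
have n_gt0 : (0 < n)%N by near: n; exact: nbhs_infty_gt.
have le_rr : ((r n ^ r n)%:R : R) <= eps * n%:R by near: n; exact: near_expn_self_le.
by apply: le_trans (M_le R n_gt0 (r_gt0 n)) _; lra.
Unshelve. all: by end_near.
Qed.

Lemma near_M_div_n (eps : R) : (forall K, \forall n \near \oo, (K <= r n)%N) ->
  0 < eps -> \forall n \near \oo, `|1 - M R n (r n) / n%:R| <= eps.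
Proof.
move=> r_large eps_gt0; near=> n.
have n_gt0 : (0 < n)%N by near: n; exact: nbhs_infty_gt.
have r_gt1 : (1 < r n)%N by near: n; exact: r_large 2%N.
have le_rr4 : ((r n ^ r n)%:R : R) <= 4^-1 * n%:R by near: n; exact: near_expn_self_le.
have le_rr : ((r n ^ r n)%:R : R) <= eps / 2 * n%:R.
  by near: n; apply: near_expn_self_le; rewrite ?divr_gt0.
have le_2rn : (2 * r n <= n)%N.
  have := leq_self_expn (r_gt0 n); rewrite -(ler_nat R) -(ler_nat R) natrM => ?.
  by have := ler0n R n; lra.
have := dist_M_le R r_gt1 le_2rn; rewrite distrC => le_dist.
have n_pos : 0 < n%:R :> R by rewrite ltr0n.
rewrite (_ : 1 - _ = (n%:R - M R n (r n)) / n%:R); last by field; rewrite gt_eqF.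
by rewrite normrM normfV normr_nat ler_pdivrMr //; lra.
Unshelve. all: by end_near.
Qed.
End Asymptotics.

Theorem theorem1 (R : realType) :
  (forall n r : nat, (0 < n)%N -> (0 < r)%N ->
     M R n r <= n%:R + (r ^ r)%:R)
  /\
  (forall r : nat -> nat, (forall n, (0 < r n)%N) ->
     (\forall n \near \oo, (r n)%:R < ln (n%:R : R) / ln (ln (n%:R : R))) ->
     forall eps : R, 0 < eps ->
       \forall n \near \oo, M R n (r n) <= (1 + eps) * n%:R)
  /\
  (forall n r : nat, (1 < r)%N -> (2 * r + 2 < n)%N ->
     (n - 2 * r + 3)%:R - (n - 2 * r + 2)%:R / ('C(2 * r - 3, r - 2))%:R
       <= M R n r)
  /\
  (forall r : nat -> nat, (forall n, (0 < r n)%N) ->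
     (forall K : nat, \forall n \near \oo, (K <= r n)%N) ->
     (\forall n \near \oo, (r n)%:R < ln (n%:R : R) / ln (ln (n%:R : R))) ->
     (fun n : nat => M R n (r n) / n%:R) @ \oo --> (1%R : R^o)).
Proof.
split; first exact: M_le.
split; first by move=> r r_gt0 r_small eps; exact: near_M_le.
split.
  move=> n r r_gt1 lt_n; have le_2rn : (2 * r <= n)%N by lia.
  by apply: le_trans _ (M_ge R r_gt1 le_2rn); rewrite gerBl divr_ge0.
move=> r r_gt0 r_large r_small; apply/cvgrPdist_le => eps.
exact: near_M_div_n.
Qed.
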